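(* Let $P$ and $Q$ be arbitrary distributions on $\mathcal{X}$ with densities, let $\varepsilon>0$, and let $\tau=\max\{\int_{\mathcal{X}}\max\{P(x)-e^{\varepsilon}Q(x),0\}\mathrm{d}x,\ \int_{\mathcal{X}}\max\{Q(x)-e^{\varepsilon}P(x),0\}\mathrm{d}x\}$. Assume $\tau=\int_{\mathcal{X}}\max\{P(x)-e^{\varepsilon}Q(x),0\}\mathrm{d}x$. Then there exists $\varepsilon'\in[0,\varepsilon]$ such that $\tau=\int_{\mathcal{X}}\max\{Q(x)-e^{\varepsilon'}P(x),0\}\mathrm{d}x$. *)

From mathcomp Require Import all_boot all_order all_algebra.
From mathcomp Require Import all_classical all_reals all_analysis.
Set Implicit Arguments. Unset Strict Implicit. Unset Printing Implicit Defensive.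
Import Order.TTheory GRing.Theory Num.Theory.
Local Open Scope ring_scope.
Local Open Scope ereal_scope.

Definition is_density d (X : measurableType d) (R : realType)
  (mu : {measure set X -> \bar R}) (p : X -> R) : Prop :=
  [/\ measurable_fun setT p, (forall x, (0 <= p x)%R) &
      \int[mu]_x (p x)%:E = 1].

Definition hockey d (X : measurableType d) (R : realType)
  (mu : {measure set X -> \bar R}) (p q : X -> R) (eps : R) : \bar R :=
  \int[mu]_x (Num.max (p x - expR eps * q x) 0)%R%:E.

(** The map [e |-> hockey Q P e] is nonincreasing and, since [expR] is
    continuous and [P] has mass 1, continuous: it moves by at most
    [|expR a - expR b|].  At [e = 0] the two hockey-stick divergences
    coincide (their difference integrates [Q - P]), so
    [hockey Q P 0 = hockey P Q 0 >= hockey P Q eps = tau], while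
    [hockey Q P eps <= tau] by the choice of [tau].  The intermediate value
    theorem on [[0, eps]] gives [eps']. *)
From mathcomp Require Import all_boot all_order all_algebra.
From mathcomp Require Import all_classical all_reals all_analysis measurable_realfun.
From mathcomp Require Import ring lra.
Import Order.TTheory GRing.Theory Num.Theory.
Import numFieldNormedType.Exports.
Local Open Scope classical_set_scope.
Local Open Scope ring_scope.

Section hockey_stick.
Context {d} {X : measurableType d} {R : realType} (mu : {measure set X -> \bar R}).

Lemma measurable_hockey_integrand (f g : X -> R) (c : R) :
  measurable_fun setT f -> measurable_fun setT g ->
  measurable_fun setT (fun x => (Num.max (f x - c * g x) 0)%:E).
Proof.
move=> mf mg; apply/measurable_EFinP; apply: (measurable_maxr _ (measurable_cst _)).
by apply: measurable_funB => //; apply: measurable_funM => //; exact: measurable_cst.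
Qed.

Variables p q : X -> R.
Hypotheses (mp : measurable_fun setT p) (mq : measurable_fun setT q).
Hypotheses (p_ge0 : forall x, 0 <= p x) (q_ge0 : forall x, 0 <= q x).

Let max_ge0 (r : R) : 0 <= Num.max r 0.
Proof. by rewrite le_max lexx orbT. Qed.

Lemma hockey_ge0 (eps : R) : (0 <= hockey mu p q eps)%E.
Proof. by apply: integral_ge0 => x _; rewrite lee_fin. Qed.

Lemma hockey_le_integral (eps : R) :
  (hockey mu p q eps <= \int[mu]_x (p x)%:E)%E.
Proof.
apply: ge0_le_integral => //; first by move=> x _; rewrite lee_fin.
- exact: measurable_hockey_integrand.
- exact/measurable_EFinP.
move=> x _; rewrite lee_fin ge_max p_ge0 andbT lerBlDr lerDl.
by rewrite mulr_ge0 // expR_ge0.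
Qed.

Lemma hockey_fin_num (eps : R) :
  (\int[mu]_x (p x)%:E)%E \is a fin_num -> hockey mu p q eps \is a fin_num.
Proof.
have ip_ge0 : (0 <= \int[mu]_x (p x)%:E)%E by apply: integral_ge0 => x _; rewrite lee_fin.
rewrite !ge0_fin_numE ?hockey_ge0 //.
exact: le_lt_trans (hockey_le_integral eps).
Qed.

Lemma hockey_nonincreasing {a b : R} :
  a <= b -> (hockey mu p q b <= hockey mu p q a)%E.
Proof.
move=> ab; apply: ge0_le_integral => //; first by move=> x _; rewrite lee_fin.
- exact: measurable_hockey_integrand.
- exact: measurable_hockey_integrand.
move=> x _; rewrite lee_fin le_max2 // lerD2l lerN2 ler_wpM2r //.
by rewrite ler_expR.
Qed.

Lemma hockey_le_add {a b : R} : a <= b ->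
  (hockey mu p q a <=
   hockey mu p q b + (expR b - expR a)%:E * \int[mu]_x (q x)%:E)%E.
Proof.
move=> ab; have eab : 0 <= expR b - expR a by rewrite subr_ge0 ler_expR.
have mcq : measurable_fun setT (fun x => ((expR b - expR a) * q x)%:E).
  by apply/measurable_EFinP; apply: measurable_funM => //; exact: measurable_cst.
have -> : ((expR b - expR a)%:E * \int[mu]_x (q x)%:E =
           \int[mu]_x ((expR b - expR a) * q x)%:E)%E.
  under [RHS]eq_integral do rewrite EFinM.
  rewrite ge0_integralZl ?lee_fin //; first exact/measurable_EFinP.
  by move=> x _; rewrite lee_fin.
rewrite /hockey -ge0_integralD //; first last.
- by move=> x _; rewrite lee_fin mulr_ge0.
- exact: measurable_hockey_integrand.
- by move=> x _; rewrite lee_fin.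
apply: ge0_le_integral => //; first by move=> x _; rewrite lee_fin.
- exact: measurable_hockey_integrand.
- by apply: emeasurable_funD => //; exact: measurable_hockey_integrand.
move=> x _; rewrite -EFinD lee_fin ge_max addr_ge0 ?mulr_ge0 // andbT.
have -> : p x - expR a * q x = p x - expR b * q x + (expR b - expR a) * q x.
  by ring.
by rewrite lerD2r le_max lexx.
Qed.

Lemma hockey0_add_integral :
  (hockey mu p q 0 + \int[mu]_x (q x)%:E =
   hockey mu q p 0 + \int[mu]_x (p x)%:E)%E.
Proof.
rewrite /hockey -!ge0_integralD //;
  do ?[by move=> x _; rewrite lee_fin | exact/measurable_EFinP
       | exact: measurable_hockey_integrand].
apply: eq_integral => x _; rewrite -!EFinD expR0 !mul1r; congr (_%:E).
by case: (leP (p x - q x) 0) => h1; case: (leP (q x - p x) 0) => h2;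
  rewrite ?(max_r h1) ?(max_l (ltW h1)) ?(max_r h2) ?(max_l (ltW h2)); lra.
Qed.

Lemma dist_fine_hockey_le (a b : R) :
  (\int[mu]_x (p x)%:E)%E \is a fin_num -> (\int[mu]_x (q x)%:E = 1)%E ->
  `|fine (hockey mu p q a) - fine (hockey mu p q b)| <= `|expR a - expR b|.
Proof.
move=> pfin iq; wlog ab : a b / a <= b.
  move=> H; case: (leP a b) => [|/ltW] ab; first exact: H.
  by rewrite distrC [X in _ <= X]distrC; exact: H.
have := hockey_le_add ab; have := hockey_nonincreasing ab.
rewrite iq mule1 -(fineK (hockey_fin_num a pfin)) -(fineK (hockey_fin_num b pfin)).
rewrite -EFinD !lee_fin => h1 h2.
have eab : expR a <= expR b by rewrite ler_expR.
by rewrite ger0_norm ?subr_ge0 // ler0_norm ?subr_le0 //; lra.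
Qed.

Lemma continuous_fine_hockey :
  (\int[mu]_x (p x)%:E)%E \is a fin_num -> (\int[mu]_x (q x)%:E = 1)%E ->
  continuous (fun e => fine (hockey mu p q e)).
Proof.
move=> pfin iq e; apply/cvgrPdist_le => r r0.
have /cvgrPdist_le /(_ r r0) := @continuous_expR R e.
by apply: filterS => e' /(le_trans _); apply; exact: dist_fine_hockey_le.
Qed.

End hockey_stick.

Theorem lemmaB1 (d : measure_display) (X : measurableType d) (R : realType)
  (mu : {measure set X -> \bar R}) (P Q : X -> R) (eps : R) :
  is_density mu P -> is_density mu Q -> 0 < eps ->
  let tau := Order.max (hockey mu P Q eps) (hockey mu Q P eps) in
  tau = hockey mu P Q eps ->
  exists eps' : R, 0 <= eps' <= eps /\ tau = hockey mu Q P eps'.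
Proof.
move=> [mP P_ge0 iP] [mQ Q_ge0 iQ] eps_gt0 tau tauE.
have hQP_fin e : hockey mu Q P e \is a fin_num.
  by apply: hockey_fin_num => //; rewrite iQ.
have tau_fin : tau \is a fin_num by rewrite tauE hockey_fin_num // iP.
have hQP0 : hockey mu Q P 0 = hockey mu P Q 0.
  have := hockey0_add_integral mu Q P mQ mP Q_ge0 P_ge0; rewrite iP iQ.
  by move/(congr1 (fun z => z - 1)%E); rewrite !addeK.
have tau_le0 : (tau <= hockey mu Q P 0)%E.
  by rewrite tauE hQP0 hockey_nonincreasing // ltW.
have tau_geeps : (hockey mu Q P eps <= tau)%E by rewrite le_max lexx orbT.
have [e e_itv he] : exists2 e, e \in `[0, eps] &
    fine (hockey mu Q P e) = fine tau.
  apply: IVT; first exact: ltW.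
    by apply/continuous_subspaceT/continuous_fine_hockey => //; rewrite iQ.
  by rewrite ge_min le_max (fine_le _ _ tau_geeps) ?(fine_le _ _ tau_le0) ?orbT.
exists e; split; first by move: e_itv; rewrite in_itv.
by rewrite -(fineK tau_fin) -he fineK.
Qed.
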